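(* Let $k\ge 2$ and let $G_1,\dots,G_k$ be vertex-disjoint graphs, $G_i$ of order $n_i\ge 3$, such that $G_1$ and $G_k$ each have at least one vertex of degree $n_i-1$ (adjacent to all other vertices of $G_i$), and each $G_i$ with $2\le i\le k-1$ has at least two vertices of degree $n_i-1$. Let $S(G_1,\dots,G_k)$ be the graph obtained from the disjoint union $G_1\cup\cdots\cup G_k$ by adding, for each $2\le i\le k$, one edge $e_i$ joining a vertex of degree $n_{i-1}-1$ in $G_{i-1}$ to a vertex of degree $n_i-1$ in $G_i$. Then $$D(S(G_1,\dots,G_k),x)=\prod_{i=1}^k D(G_i,x).$$ In particular, if $G_i=K_{n_i}$ with $n_i\ge 3$ for all $i$, then $D(S(K_{n_1},\dots,K_{n_k}),x)=\prod_{i=1}^k\big((1+x)^{n_i}-1\big)$.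
   Context: All graphs are finite and simple. For a graph $G$, a set $S\subseteq V(G)$ is dominating if every vertex of $V(G)\setminus S$ is adjacent to some vertex of $S$. Let $d(G,i)$ be the number of dominating sets of $G$ of cardinality $i$; the domination polynomial is $D(G,x)=\sum_{i=1}^{|V(G)|} d(G,i)x^i$. *)

From HB Require Import structures.
From mathcomp Require Import all_boot all_order all_algebra.
Set Implicit Arguments. Unset Strict Implicit. Unset Printing Implicit Defensive.
Import GRing.Theory.
Local Open Scope ring_scope.

Definition simple_graph (T : finType) (e : rel T) : Prop :=
  symmetric e /\ irreflexive e.

Definition deg (T : finType) (e : rel T) (v : T) : nat := #|[set w | e v w]|.

Definition dominating (T : finType) (e : rel T) (S : {set T}) : bool :=
  [forall v, (v \in S) || [exists u in S, e u v]].

Definition dcount (T : finType) (e : rel T) (i : nat) : nat :=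
  #|[set S : {set T} | dominating e S & #|S| == i]|.

Definition dompoly (T : finType) (e : rel T) : {poly int} :=
  \sum_(1 <= i < #|T|.+1) (dcount e i)%:R *: 'X^i.

(* The graph S(G_1,...,G_k): vertices = disjoint union {i : 'I_k & T i};
   edges = edges of each G_i, plus for every i with i.+1 < k (0-based) the
   edge joining a i in G_i to b (i+1) in G_(i+1). *)
Definition chain_rel (k : nat) (T : 'I_k -> finType) (e : forall i, rel (T i))
    (a b : forall i, T i) : rel {i : 'I_k & T i} :=
  fun x y =>
    if tag x == tag y then e (tag x) (tagged x) (tagged_as x y)
    else [|| [&& (tag y : nat) == (tag x).+1, tagged x == a (tag x)
                 & tagged y == b (tag y)]
           | [&& (tag x : nat) == (tag y).+1, tagged y == a (tag y)
                 & tagged x == b (tag x)]].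

Definition complete_rel (n : nat) : rel 'I_n := fun x y => x != y.

From HB Require Import structures.
From mathcomp Require Import all_boot all_order all_algebra.
Import GRing.Theory.
Local Open Scope ring_scope.

(* A dominating set S of S(G_1,...,G_k) meets every G_i: a vertex of G_i other
   than the two endpoints of bridges can only be dominated from inside G_i, and
   n_i >= 3 provides such a vertex.  Conversely, the endpoints of the bridges are
   universal in their G_i, so a bridge never dominates a vertex that the part of
   S inside G_i does not already dominate.  Hence S is dominating iff each of its
   restrictions S_i to G_i is, and since |S| = sum |S_i| the generating
   polynomial of dominating sets factors. *)

Set Implicit Arguments.
Unset Strict Implicit.
Unset Printing Implicit Defensive.

Lemma dominating_neq0 (T : finType) (e : rel T) (S : {set T}) (v : T) :
  dominating e S -> S != set0.
Proof.
move=> /forallP /(_ v) /orP [vS | /existsP [u /andP [uS _]]];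
  by apply/set0Pn; eexists; eauto.
Qed.

(* The witness [v] excludes the empty graph, whose empty set is dominating
   although [dompoly] only counts sets of size at least 1. *)
Lemma dompolyE (T : finType) (e : rel T) (v : T) :
  dompoly e = \sum_(S : {set T} | dominating e S) 'X^#|S|.
Proof.
rewrite /dompoly.
under eq_bigr => i _ do rewrite scaler_nat -sumr_const.
rewrite (exchange_big_dep (dominating e)) /=; last first.
  by move=> i S _; rewrite inE => /andP [].
apply: eq_bigr => S domS.
rewrite (eq_bigl (eq_op^~ #|S|)); last by move=> i; rewrite inE domS eq_sym.
rewrite (eq_bigr (fun=> 'X^#|S|)); last by move=> i /eqP ->.
rewrite big_nat1_eq ltnS max_card andbT lt0n cards_eq0.
by rewrite (negPf (dominating_neq0 v domS)).
Qed.

Lemma sum_expr_card_sets (R : pzSemiRingType) (T : finType) (x : R) :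
  \sum_(S : {set T}) x ^+ #|S| = (1 + x) ^+ #|T|.
Proof.
rewrite addrC exprD1n (partition_big (fun S : {set T} => inord #|S| : 'I_#|T|.+1) predT) //=.
apply: eq_bigr => j _.
rewrite (eq_bigr (fun=> x ^+ j)); last first.
  by move=> S /eqP <-; rewrite (@inordK #|T|) // ltnS max_card.
rewrite (eq_bigl (mem [set S : {set T} | #|S| == j])) ?sumr_const ?card_draws // => S.
rewrite !inE; apply/eqP/eqP => [<- | ->]; last by rewrite inord_val.
by rewrite (@inordK #|T|) // ltnS max_card.
Qed.

Lemma full_deg_adj (T : finType) (e : rel T) (v w : T) : irreflexive e ->
  deg e v = (#|T| - 1)%N -> w != v -> e v w.
Proof.
move=> irr degv wv.
have sub : [set w | e v w] \subset [set~ v].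
  by apply/subsetP => x; rewrite !inE; apply: contraL => /eqP ->; rewrite irr.
have /subset_cardP eq_nbhd : #|[set w | e v w]| = #|[set~ v]|.
  by rewrite cardsC1 -subn1 -degv.
by have := eq_nbhd sub w; rewrite !inE wv.
Qed.

Section SigmaSets.

Variables (I : finType) (T : I -> finType).
Local Notation V := {i : I & T i}.
Local Notation tg := (Tagged (fun j => T j)).

Definition fibre (i : I) (S : {set V}) : {set T i} := [set t | tg t \in S].
Definition slice (i : I) : {set V} := [set x | tag x == i].

Lemma Tagged_inj (i : I) : injective (@Tagged I i (fun j => T j)).
Proof. by move=> x y /(congr1 (tagged_as (tg x))); rewrite !tagged_asE. Qed.

Lemma fibre_imset (i : I) (A : {set T i}) : fibre i (tg @: A) = A.
Proof. by apply/setP => t; rewrite inE (mem_imset _ _ (@Tagged_inj i)). Qed.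

Lemma imset_fibre (i : I) (B : {set V}) : B \subset slice i -> tg @: fibre i B = B.
Proof.
move=> /subsetP sBi; apply/setP => -[j u]; apply/imsetP/idP => [[t] | uB].
  by rewrite inE => tB ->.
by have /[!inE] /= /eqP ji := sBi _ uB; subst j; exists u; rewrite ?inE.
Qed.

Lemma fibre_setI_slice (i : I) (S : {set V}) : fibre i (S :&: slice i) = fibre i S.
Proof. by apply/setP => t; rewrite !inE /= eqxx andbT. Qed.

Lemma card_sigma_set (S : {set V}) : #|S| = (\sum_i #|S :&: slice i|)%N.
Proof.
rewrite -sum1_card (partition_big (fun x : V => tag x) predT) //=.
by apply: eq_bigr => i _; rewrite -sum1_card; apply: eq_bigl => x; rewrite !inE.
Qed.

Variable R : comPzSemiRingType.

Lemma sum_sets_slice (x : R) (i : I) (P : pred {set T i}) :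
  \sum_(A : {set T i} | P A) x ^+ #|A|
  = \sum_(B : {set V} | (B \subset slice i) && P (fibre i B)) x ^+ #|B|.
Proof.
symmetry; rewrite (reindex_onto (fun A : {set T i} => tg @: A) (fibre i)) /=; last first.
  by move=> B /andP [sBi _]; apply: imset_fibre.
apply: eq_big => [A | A _]; last by rewrite card_imset //; apply: Tagged_inj.
rewrite fibre_imset eqxx andbT andb_idl // => _.
by apply/subsetP => y /imsetP [t _ ->]; rewrite inE.
Qed.

(* A set of the disjoint union is the same as a family of sets, one per summand. *)
Lemma sum_sigma_sets (x : R) (P : forall i, pred {set T i}) :
  \sum_(S : {set V} | [forall i, P i (fibre i S)]) x ^+ #|S|
  = \prod_i \sum_(A : {set T i} | P i A) x ^+ #|A|.
Proof.
under [RHS]eq_bigr => i _ do rewrite sum_sets_slice.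
rewrite bigA_distr_big_dep; symmetry.
rewrite (reindex_onto (fun S => [ffun i => S :&: slice i]) (fun f => \bigcup_i f i)).
  apply: eq_big => [S | S _] /=; last first.
    by rewrite prodrXr card_sigma_set; congr (x ^+ _); apply: eq_bigr => i _; rewrite ffunE.
  have -> : \bigcup_i [ffun i => S :&: slice i] i = S.
    apply/setP => y; apply/bigcupP/idP => [[i _] | yS].
      by rewrite ffunE inE => /andP [].
    by exists (tag y); rewrite // ffunE !inE yS eqxx.
  rewrite eqxx andbT; apply/familyP/forallP => P_S i; have := P_S i;
    by rewrite ffunE unfold_in /= fibre_setI_slice subsetIr.
move=> f /familyP fP; apply/ffunP => i; rewrite ffunE; apply/setP => y.
have sub j : f j \subset slice j by have /andP [] := fP j.
rewrite !inE; apply/andP/idP => [[/bigcupP [j _ yj] /eqP yi] | yfi].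
  by have /[!inE] /eqP yj' := subsetP (sub j) _ yj; rewrite -yi yj'.
split; first by apply/bigcupP; exists i.
by have /[!inE] := subsetP (sub i) _ yfi.
Qed.

End SigmaSets.

Unset Implicit Arguments.

Section Chain.

Variables (k : nat) (T : 'I_k -> finType) (e : forall i, rel (T i)).
Variables (a b : forall i, T i).
Local Notation V := {i : 'I_k & T i}.
Local Notation tg := (Tagged (fun j => T j)).
Local Notation chain := (chain_rel e a b).

Definition bridge_end {i : 'I_k} (t : T i) : bool :=
  (t == a i) && (i.+1 < k)%N || (t == b i) && (0 < i)%N.

Lemma chain_rel_tg (i : 'I_k) (u t : T i) : chain (tg u) (tg t) = e i u t.
Proof. by rewrite /chain_rel /= eqxx tagged_asE. Qed.

Lemma chain_rel_cross {i j : 'I_k} {u : T j} {t : T i} :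
  j != i -> chain (tg u) (tg t) -> bridge_end t.
Proof.
rewrite /chain_rel /bridge_end /= => /negPf ->.
case/orP => [/and3P [/eqP -> _ /eqP ->] | /and3P [/eqP ji /eqP -> _]].
  by rewrite eqxx orbT.
by rewrite eqxx -ji ltn_ord.
Qed.

Hypothesis simple : forall i, simple_graph (e i).
Hypothesis card3 : forall i, (3 <= #|T i|)%N.
Hypothesis deg_a : forall i : 'I_k, (i.+1 < k)%N -> deg (e i) (a i) = (#|T i| - 1)%N.
Hypothesis deg_b : forall i : 'I_k, (0 < i)%N -> deg (e i) (b i) = (#|T i| - 1)%N.

Lemma bridge_end_adj {i : 'I_k} {t w : T i} : bridge_end t -> w != t -> e i w t.
Proof.
have [sym irr] := simple i; rewrite sym.
by case/orP => /andP [/eqP -> lt]; apply: (full_deg_adj irr); by [apply: deg_a | apply: deg_b].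
Qed.

Lemma exists_inner (i : 'I_k) : exists w : T i, ~~ bridge_end w.
Proof.
have [w /[!inE] /norP [wa wb] | ends] := pickP [predC [set a i; b i]].
  by exists w; rewrite /bridge_end (negPf wa) (negPf wb).
have : (#|T i| <= #|[set a i; b i]|)%N.
  by apply/subset_leq_card/subsetP => t _; have /[!inE] /negbFE := ends t.
by rewrite cards2 leqNgt (leq_trans _ (card3 i)) // ltnS; case: (_ != _).
Qed.

Lemma fibre_dominating_neq0 {S : {set V}} (i : 'I_k) :
  dominating chain S -> fibre i S != set0.
Proof.
move=> /forallP domS; have [w w_inner] := exists_inner i.
have /orP [wS | /existsP [[j u] /andP [uS uw]]] := domS (tg w).
  by apply/set0Pn; exists w; rewrite inE.
have [ji | ij] := eqVneq j i; last by rewrite (chain_rel_cross ij uw) in w_inner.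
by subst j; apply/set0Pn; exists u; rewrite inE.
Qed.

Lemma dominating_chain (S : {set V}) :
  dominating chain S = [forall i, dominating (e i) (fibre i S)].
Proof.
apply/idP/forallP => [domS i | domSi].
  have /set0Pn [s sS] := fibre_dominating_neq0 i domS.
  apply/forallP => t; have [//|tS /=] := boolP (t \in fibre i S).
  have /negPf tgS : tg t \notin S by rewrite inE in tS.
  move/forallP: domS => /(_ (tg t)); rewrite tgS => /existsP [[j u] /andP [uS ut]].
  apply/existsP; have [ji | ij] := eqVneq j i.
    by subst j; exists u; rewrite inE uS -chain_rel_tg.
  exists s; rewrite sS bridge_end_adj ?(chain_rel_cross ij ut) //.
  by apply: contraNneq tS => <-.
apply/forallP => -[i t]; have /forallP /(_ t) := domSi i.
case/orP => [tS | /existsP [u /andP [uS ut]]]; first by rewrite inE in tS; rewrite tS.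
by apply/orP; right; apply/existsP; exists (tg u); rewrite inE in uS; rewrite uS chain_rel_tg.
Qed.

Lemma dompoly_chain : (0 < k)%N -> dompoly chain = \prod_i dompoly (e i).
Proof.
move=> k_gt0; pose i0 := Ordinal k_gt0.
have /card_gt0P [t0 _] : (0 < #|T i0|)%N := ltnW (ltnW (card3 i0)).
rewrite (dompolyE _ (tg t0)) (eq_bigl _ _ dominating_chain)
  (sum_sigma_sets _ (fun i => dominating (e i))).
apply: eq_bigr => i _; have /card_gt0P [t _] : (0 < #|T i|)%N := ltnW (ltnW (card3 i)).
by rewrite (dompolyE _ t).
Qed.

End Chain.

Arguments dompoly_chain {k T e a b}.

Lemma complete_simple (n : nat) : simple_graph (@complete_rel n).
Proof. by split => [x y | x]; rewrite /complete_rel ?eqxx // eq_sym. Qed.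

Lemma deg_complete (n : nat) (v : 'I_n) : deg (@complete_rel n) v = (#|'I_n| - 1)%N.
Proof.
by rewrite /deg subn1 -(cardsC1 v); apply: eq_card => w; rewrite !inE eq_sym.
Qed.

Lemma dominating_complete (n : nat) (S : {set 'I_n}) :
  S != set0 -> dominating (@complete_rel n) S.
Proof.
case/set0Pn => u uS; apply/forallP => v; have [// | vS /=] := boolP (v \in S).
by apply/existsP; exists u; rewrite uS; apply: contraNneq vS => <-.
Qed.

Lemma dompoly_complete (n : nat) : (0 < n)%N -> dompoly (@complete_rel n) = (1 + 'X) ^+ n - 1.
Proof.
case: n => // n _; rewrite (dompolyE _ ord0) (eq_bigl (fun S => S != set0)) => [|S]; last first.
  by apply/idP/idP => [/(dominating_neq0 ord0) | /dominating_complete].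
have := sum_expr_card_sets ('I_n.+1 : finType) ('X : {poly int}); rewrite card_ord => <-.
by rewrite [in RHS](bigD1 set0) //= cards0 expr0 addrC addrK.
Qed.

Theorem mainTheorem7 (k : nat) (hk : (2 <= k)%N) :
  (forall (T : 'I_k -> finType) (e : forall i, rel (T i)) (a b : forall i, T i),
     (forall i, simple_graph (e i)) ->
     (forall i, (3 <= #|T i|)%N) ->
     (* G_1 and G_k each have a vertex of degree n_i - 1 *)
     (forall i : 'I_k, (i : nat) = 0%N \/ (i : nat) = k.-1 ->
        exists v : T i, deg (e i) v = (#|T i| - 1)%N) ->
     (* each inner G_i has at least two vertices of degree n_i - 1 *)
     (forall i : 'I_k, (0 < i)%N -> (i < k.-1)%N ->
        exists u v : T i, u != v /\ deg (e i) u = (#|T i| - 1)%N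
                          /\ deg (e i) v = (#|T i| - 1)%N) ->
     (* endpoints of the added edges e_i have full degree *)
     (forall i : 'I_k, (i.+1 < k)%N -> deg (e i) (a i) = (#|T i| - 1)%N) ->
     (forall i : 'I_k, (0 < i)%N -> deg (e i) (b i) = (#|T i| - 1)%N) ->
     dompoly (chain_rel e a b) = \prod_(i < k) dompoly (e i))
  /\
  (forall (n : 'I_k -> nat) (a b : forall i, 'I_(n i)),
     (forall i, (3 <= n i)%N) ->
     dompoly (chain_rel (T := fun i => 'I_(n i)) (fun i => @complete_rel (n i)) a b)
       = \prod_(i < k) ((1 + 'X) ^+ n i - 1)).
Proof.
have k_gt0 : (0 < k)%N := ltnW hk.
split => [T e a b simple card3 _ _ deg_a deg_b | n a b n_ge3].
  exact: dompoly_chain simple card3 deg_a deg_b k_gt0.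
have card3 i : (3 <= #|'I_(n i)|)%N by rewrite card_ord.
rewrite (dompoly_chain (fun i => complete_simple (n i)) card3
  (fun i _ => deg_complete _ (a i)) (fun i _ => deg_complete _ (b i)) k_gt0).
by apply: eq_bigr => i _; apply: dompoly_complete (ltnW (ltnW (n_ge3 i))).
Qed.
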